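(* Let $G=(V,E,w)$ be a graph with $V\ne\emptyset$, positive integer vertex weights and maximum degree $\Delta\ge1$. Let $1\le\alpha\le\Delta$ and $\gamma=\lceil\sqrt{2\Delta\alpha}\,\rceil$, assume $\gamma\le\Delta$, and suppose $G$ is a $\gamma$-stable instance of \texttt{MIS} with maximum weight independent set $I^*$. Let $I$ be an independent set with $w(I)\ge w(I^* )/\alpha$, and let $S=\texttt{PURIFY}(G,I,\gamma)$. If $I\ne I^*$, then (1) $S\ne\emptyset$ and (2) $S\subseteq I^*$.
   Context: \texttt{MIS}: given a graph $G=(V,E)$ with weights $w:V\to\mathbb{R}_{>0}$, find an independent set maximizing $w(I)=\sum_{u\in I}w_u$; $w(X)=\sum_{u\in X}w_u$. For $\gamma\ge1$, a $\gamma$-perturbation of $w$ is any $w'$ with $w_u\le w'_u\le\gamma w_u$ for all $u$. The instance is $\gamma$-stable if it has a unique maximum weight independent set $I^*$ and $I^*$ remains the unique maximum weight independent set under every $\gamma$-perturbation of $w$. The procedure $\texttt{PURIFY}(G,I,\gamma)$ (for integer weights, integer $\gamma\ge1$ and independent set $I$): build an unweighted bipartite graph $G_0=(L\cup R,E_0)$ where $L$ contains $\gamma\cdot w(u)$ copies of each $u\in I$ and $R$ contains $w(v)$ copies of each $v\in V\setminus I$; for every edge $(u,v)\in E$ with $u\in I$, $v\notin I$, join every copy of $u$ in $L$ to every copy of $v$ in $R$. Compute a maximum cardinality matching $M$ of $G_0$ and return the set of all $u\in I$ having at least one copy in $L$ unmatched by $M$. *)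

From HB Require Import structures.
From mathcomp Require Import all_boot all_order all_algebra.
Set Implicit Arguments. Unset Strict Implicit. Unset Printing Implicit Defensive.
Import Order.TTheory GRing.Theory Num.Theory.

Definition simple_graph (T : finType) (e : rel T) : Prop :=
  symmetric e /\ irreflexive e.

Definition deg (T : finType) (e : rel T) (v : T) : nat := #|[set u | e v u]|.
Definition maxdeg (T : finType) (e : rel T) : nat := \max_(v : T) deg e v.

Definition independent (T : finType) (e : rel T) (I : {set T}) : bool :=
  [forall u in I, forall v in I, ~~ e u v].

Definition wsum (R : numDomainType) (T : finType) (w : T -> R) (X : {set T}) : R :=
  (\sum_(u in X) w u)%R.

Definition perturbation (R : numDomainType) (T : finType) (w : T -> nat)
    (gamma : nat) (w' : T -> R) : Prop :=
  forall u, ((w u)%:R <= w' u <= gamma%:R * (w u)%:R)%R.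

Definition stable_with (R : numDomainType) (T : finType) (e : rel T)
    (w : T -> nat) (gamma : nat) (Istar : {set T}) : Prop :=
  independent e Istar /\
  forall w' : T -> R, perturbation w gamma w' ->
    forall J : {set T}, independent e J -> J != Istar ->
      (wsum w' J < wsum w' Istar)%R.

(* Copies are pairs (vertex, index). *)
Definition Lcopy (T : finType) (w : T -> nat) (I : {set T}) (gamma : nat)
    (c : T * nat) : bool := (c.1 \in I) && (c.2 < gamma * w c.1).
Definition Rcopy (T : finType) (w : T -> nat) (I : {set T}) (c : T * nat) : bool :=
  (c.1 \notin I) && (c.2 < w c.1).

Definition G0_matching (T : finType) (e : rel T) (w : T -> nat) (I : {set T})
    (gamma : nat) (M : seq ((T * nat) * (T * nat))) : bool :=
  all (fun p => [&& Lcopy w I gamma p.1, Rcopy w I p.2 & e p.1.1 p.2.1]) M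
  && uniq (map fst M) && uniq (map snd M).

Definition G0_max_matching (T : finType) (e : rel T) (w : T -> nat) (I : {set T})
    (gamma : nat) (M : seq ((T * nat) * (T * nat))) : Prop :=
  G0_matching e w I gamma M /\
  forall M', G0_matching e w I gamma M' -> size M' <= size M.

Definition purify_out (T : finType) (w : T -> nat) (I : {set T}) (gamma : nat)
    (M : seq ((T * nat) * (T * nat))) : {set T} :=
  [set u in I | [exists i : 'I_(gamma * w u), (u, val i) \notin map fst M]].

From HB Require Import structures.
From mathcomp Require Import all_boot all_order all_algebra.
From mathcomp Require Import zify lra boolp.
Import Order.TTheory GRing.Theory Num.Theory.
Set Implicit Arguments. Unset Strict Implicit. Unset Printing Implicit Defensive.

(* (2) If a copy of some u in I \ I⋆ is unmatched, let A be the vertices of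
   I \ I⋆ having a copy reachable from it by alternating paths.  As the matching
   has no augmenting path, every copy of a vertex of I⋆ ∩ N(A) is matched to a
   copy of a vertex of A, so w(I⋆ ∩ N(A)) <= γ w(A).  But γ-stability, applied to
   the weights scaled by γ on A and to the independent set (I⋆ \ N(A)) ∪ A,
   gives γ w(A) < w(I⋆ ∩ N(A)).
   (1) If all copies of I are matched, then γ w(I) <= w(N(I)) <= w(I⋆) +
   w(N(I) \ I⋆), and stability at single vertices outside I⋆ gives
   γ w(N(I) \ I⋆) < Δ w(I⋆).  Hence γ² w(I) < (γ + Δ) w(I⋆) <= 2Δα w(I) <= γ² w(I). *)

Lemma leq_size_matched (Z A B : eqType) (f : Z -> A) (g : Z -> B)
    (M : seq Z) (s : seq A) (t : seq B) :
  uniq (map g M) -> uniq s -> {subset s <= map f M} ->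
  {in M, forall z, f z \in s -> g z \in t} -> size s <= size t.
Proof.
move=> uM us sM partner; set M' := [seq z <- M | f z \in s].
have uM' : uniq (map g M') by apply: subseq_uniq uM; exact/map_subseq/filter_subseq.
apply: (@leq_trans (size M')).
  rewrite -(size_map f); apply: uniq_leq_size => // a a_s.
  have /mapP[z zM az] := sM a a_s.
  by rewrite az map_f // mem_filter -az a_s.
rewrite -(size_map g); apply: uniq_leq_size => // b /mapP[z].
by rewrite mem_filter => /andP[fz zM] ->; exact: partner.
Qed.

Lemma uniq_map_inj_in (A B : eqType) (f : A -> B) (s : seq A) :
  uniq (map f s) -> {in s &, injective f}.
Proof.
elim: s => //= a s IHs /andP[fas us] x y; rewrite !inE.
case/predU1P=> [->|xs]; case/predU1P=> [->|ys] //= fxy.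
- by move: fas; rewrite fxy map_f.
- by move: fas; rewrite -fxy map_f.
- exact: IHs.
Qed.

Section Augmenting.
Variables (X Y : eqType) (edge : X -> Y -> bool).

Definition matching (M : seq (X * Y)) : bool :=
  all (fun p => edge p.1 p.2) M && uniq (map fst M) && uniq (map snd M).

(* [x] is the end of an alternating path from [x0] using at most [k] edges of [M]. *)
Fixpoint alt_reach (M : seq (X * Y)) (x0 : X) (k : nat) (x : X) : Prop :=
  if k is k'.+1 then alt_reach M x0 k' x \/
    exists x' y', [/\ alt_reach M x0 k' x', edge x' y' & (x, y') \in M]
  else x = x0.

Lemma alt_reach_fst M x0 k x : alt_reach M x0 k x -> x = x0 \/ x \in map fst M.
Proof.
elim: k x => [|k IHk] x /=; first by left.
by case=> [/IHk //|[x' [y' [_ _ xyM]]]]; right; rewrite (map_f fst xyM).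
Qed.

Lemma alt_reach_transfer M M1 x0 k x :
  ~ alt_reach M x0 k x -> {in M, forall p, p.1 != x -> p \in M1} ->
  forall z, alt_reach M x0 k z -> alt_reach M1 x0 k z.
Proof.
move=> nx MM1; elim: k nx => [|k IHk] //= nx z.
have nxk : ~ alt_reach M x0 k x by move=> h; apply: nx; left.
case=> [/(IHk nxk) | [x' [y' [rx' exy zyM]]]]; first by left.
right; exists x', y'; split; [exact: IHk | by [] | apply: (MM1 _ zyM) => /=].
by apply: contra_notN nx => /eqP zx; right; exists x', y'; rewrite -zx.
Qed.

Definition rematch (M : seq (X * Y)) (x : X) (y : Y) : seq (X * Y) :=
  (x, y) :: [seq p <- M | p.1 != x].

Lemma rematch_matching M x y :
  matching M -> edge x y -> y \notin map snd M -> matching (rematch M x y).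
Proof.
case/andP=> /andP[/allP Medge uM1] uM2 exy yM.
rewrite /matching /= exy -andbA; apply/and3P; split.
- by apply/allP => p; rewrite mem_filter => /andP[_ /Medge].
- rewrite (subseq_uniq (map_subseq _ (filter_subseq _ _)) uM1) andbT.
  by apply/mapP => -[p]; rewrite mem_filter => /andP[/eqP px _] xp; rewrite xp in px.
- rewrite (subseq_uniq (map_subseq _ (filter_subseq _ _)) uM2) andbT.
  by apply: contra yM => /mapP[p]; rewrite mem_filter => /andP[_ pM] ->; rewrite map_f.
Qed.

Lemma size_rematch M x y :
  uniq (map fst M) -> x \in map fst M -> size (rematch M x y) = size M.
Proof.
move=> uM xM; rewrite /= size_filter -(count_predC (fun p : X * Y => p.1 == x)).
rewrite -(count_map fst (pred1 x)) count_uniq_mem // xM add1n.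
by congr _.+1; apply: eq_count => p.
Qed.

Lemma augmenting_path k M x0 x y :
  matching M -> x0 \notin map fst M -> alt_reach M x0 k x -> edge x y ->
  y \notin map snd M -> exists2 M', matching M' & size M' = (size M).+1.
Proof.
elim: k M x y => [|k IHk] M x y mM x0M /= rx exy yM.
  exists ((x0, y) :: M); rewrite // /matching /= -rx exy.
  by rewrite rx x0M yM.
have [rxk | nrxk] := pselect (alt_reach M x0 k x).
  exact: IHk mM x0M rxk exy yM.
case: rx => [//|[x' [y' [rx' ex'y' xy'M]]]].
case/andP: (mM) => /andP[_ uM1] uM2.
have xM : x \in map fst M by rewrite (map_f fst xy'M).
have y'M : y' \in map snd M by rewrite (map_f snd xy'M).
have x0M1 : x0 \notin map fst (rematch M x y).
  rewrite /= inE negb_or; apply/andP; split; first by apply: contra x0M => /eqP ->.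
  by apply: contra x0M => /mapP[p]; rewrite mem_filter => /andP[_ pM] ->; rewrite map_f.
have rx'1 : alt_reach (rematch M x y) x0 k x'.
  apply: alt_reach_transfer nrxk _ _ rx' => p pM px.
  by rewrite inE mem_filter px pM orbT.
have y'M1 : y' \notin map snd (rematch M x y).
  rewrite /= inE negb_or; apply/andP; split; first by apply: contra yM => /eqP <-.
  apply/mapP => -[p]; rewrite mem_filter => /andP[px pM] y'p.
  by move: px; rewrite (uniq_map_inj_in uM2 pM xy'M) ?eqxx.
have [M' mM' sizeM'] := IHk _ _ _ (rematch_matching mM exy yM) x0M1 rx'1 ex'y' y'M1.
by exists M' => //; rewrite sizeM' size_rematch.
Qed.

Lemma maximum_matching_alt_reach M x0 k x y :
  matching M -> (forall M', matching M' -> size M' <= size M) ->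
  x0 \notin map fst M -> alt_reach M x0 k x -> edge x y -> y \in map snd M.
Proof.
move=> mM maxM x0M rx exy; apply: contraT => yM.
have [M' /maxM + sizeM'] := augmenting_path mM x0M rx exy yM.
by rewrite sizeM' ltnn.
Qed.

End Augmenting.

Definition copies (T : finType) (A : {set T}) (m : T -> nat) : seq (T * nat) :=
  [seq (a, j) | a <- enum A, j <- iota 0 (m a)].

Lemma mem_copies (T : finType) (A : {set T}) m x j :
  ((x, j) \in copies A m) = (x \in A) && (j < m x).
Proof.
apply/allpairsPdep/andP => [[a [i [aA ij [-> ->]]]] | [xA jm]].
  by rewrite mem_enum in aA; rewrite mem_iota in ij.
by exists x, j; rewrite mem_enum mem_iota.
Qed.

Lemma size_copies (T : finType) (A : {set T}) m :
  size (copies A m) = \sum_(a in A) m a.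
Proof.
rewrite size_allpairs_dep sumnE big_map big_enum /=.
by apply: eq_bigr => a _; rewrite size_iota.
Qed.

Lemma uniq_copies (T : finType) (A : {set T}) m : uniq (copies A m).
Proof.
by apply: allpairs_uniq_dep => [|a _|[a i] [b j] _ _ [-> ->]]; rewrite ?enum_uniq ?iota_uniq.
Qed.

Definition nbhd (T : finType) (e : rel T) (A : {set T}) : {set T} :=
  [set v | [exists a in A, e a v]].

Lemma independentP (T : finType) (e : rel T) (I : {set T}) :
  reflect {in I &, forall x y, ~~ e x y} (independent e I).
Proof.
apply: (iffP forallP) => [h x y xI yI | h x].
  by have /implyP/(_ xI)/forallP/(_ y)/implyP := h x; apply.
by apply/implyP => xI; apply/forallP => y; apply/implyP; exact: h.
Qed.

Lemma independentS (T : finType) (e : rel T) (A B : {set T}) :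
  A \subset B -> independent e B -> independent e A.
Proof.
move=> /subsetP AB /independentP iB; apply/independentP => x y xA yA.
exact: iB (AB x xA) (AB y yA).
Qed.

Section Stability.
Variables (R : realFieldType) (T : finType) (e : rel T) (w : T -> nat).
Variables (g : nat) (Istar : {set T}).
Hypotheses (g_gt0 : 0 < g) (Istar_stable : stable_with R e w g Istar).

(* Scale the weights by [g] on [J :\: Istar]: [J] still loses against [Istar]. *)
Lemma stable_weight_lt (J : {set T}) : independent e J -> J != Istar ->
  g * \sum_(u in J :\: Istar) w u < \sum_(u in Istar :\: J) w u.
Proof.
move=> iJ JIstar; have [_ Istar_max] := Istar_stable.
pose w' u : R := (if u \in J :\: Istar then g%:R * (w u)%:R else (w u)%:R)%R.
have w'_pert : perturbation w g w'.
  move=> u; rewrite /w'; have g1 : (1 <= g%:R :> R)%R by rewrite ler1n.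
  have w0 : (0 <= (w u)%:R :> R)%R by [].
  by case: ifP => _; apply/andP; split; nra.
have w'_in : (\sum_(u in Istar :&: J) w' u = \sum_(u in Istar :&: J) (w u)%:R)%R.
  by apply: eq_bigr => u; rewrite /w' !inE => /andP[-> _].
have w'_out : (\sum_(u in Istar :\: J) w' u = \sum_(u in Istar :\: J) (w u)%:R)%R.
  by apply: eq_bigr => u; rewrite /w' !inE => /andP[/negbTE -> _]; rewrite andbF.
have w'_scaled : (\sum_(u in J :\: Istar) w' u = g%:R * \sum_(u in J :\: Istar) (w u)%:R)%R.
  by rewrite big_distrr; apply: eq_bigr => u; rewrite /w' => ->.
have := Istar_max w' w'_pert J iJ JIstar; rewrite /wsum.
rewrite (big_setID Istar) [X in (_ < X)%R](big_setID J) /= setIC.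
by rewrite w'_in w'_out w'_scaled ltrD2l -!natr_sum -natrM ltr_nat.
Qed.

Lemma stable_weight_gt0 (J : {set T}) : independent e J -> J != Istar -> 0 < \sum_(u in Istar) w u.
Proof.
move=> iJ JIstar; have := stable_weight_lt iJ JIstar.
have : \sum_(u in Istar :\: J) w u <= \sum_(u in Istar) w u.
  by rewrite [X in _ <= X](big_setID J) leq_addl.
lia.
Qed.

Hypothesis e_sym : symmetric e.

(* Replace the neighbours of [A] in [Istar] by [A] itself. *)
Lemma stable_nbhd_weight_lt (A : {set T}) : independent e A -> A != set0 -> [disjoint A & Istar] ->
  g * \sum_(a in A) w a < \sum_(v in Istar :&: nbhd e A) w v.
Proof.
move=> /independentP iA /set0Pn[a0 a0A] AIstar.
have [/independentP iIstar _] := Istar_stable.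
have notIstar x : x \in A -> x \notin Istar by move=> xA; rewrite (disjointFr AIstar xA).
set J := (Istar :\: nbhd e A) :|: A.
have JDIstar : J :\: Istar = A.
  apply/setP => x; rewrite !inE; have [xA|] := boolP (x \in A).
    by rewrite notIstar ?orbT.
  by rewrite orbF; case: (x \in Istar); rewrite ?andbF.
have IstarDJ : Istar :\: J = Istar :&: nbhd e A.
  apply/setP => x; rewrite !inE; have [xIstar|_] := boolP (x \in Istar); last by rewrite andbF.
  by rewrite (contraTF (notIstar x) xIstar) !andbT orbF negbK.
have iJ : independent e J.
  apply/independentP => x y; rewrite !inE.
  case/orP=> [/andP[xN xI]|xA]; case/orP=> [/andP[yN yI]|yA].
  - exact: iIstar.
  - by apply: contra xN => exy; apply/existsP; exists y; rewrite yA e_sym.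
  - by apply: contra yN => exy; apply/existsP; exists x; rewrite xA.
  - exact: iA.
have JIstar : J != Istar.
  by apply: contraTneq (notIstar _ a0A) => <-; rewrite !inE a0A orbT.
by have := stable_weight_lt iJ JIstar; rewrite JDIstar IstarDJ.
Qed.

Hypothesis e_irr : irreflexive e.

Lemma stable_vertex_weight_lt v : v \notin Istar ->
  g * w v < \sum_(x in Istar | e v x) w x.
Proof.
move=> vIstar; have i1 : independent e [set v].
  by apply/independentP => x y /set1P -> /set1P ->; rewrite e_irr.
have v0 : [set v] != set0 by apply/set0Pn; exists v; rewrite set11.
have nbhd1 : nbhd e [set v] =i [pred x | e v x].
  move=> x; rewrite inE; apply/existsP/idP => [[a /andP[/set1P ->]] | evx] //.
  by exists v; rewrite set11.
have := stable_nbhd_weight_lt i1 v0; rewrite disjoints1 big_set1 => /(_ vIstar).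
by under eq_bigl => x do rewrite in_setI nbhd1.
Qed.

(* Every vertex of [Istar] is counted at most [maxdeg e] times. *)
Lemma stable_outside_weight_lt (B : {set T}) : 0 < maxdeg e -> 0 < \sum_(u in Istar) w u ->
  [disjoint B & Istar] -> g * \sum_(v in B) w v < maxdeg e * \sum_(u in Istar) w u.
Proof.
move=> D_gt0 Istar_gt0 BIstar.
have [->|[v0 v0B]] := set_0Vmem B; first by rewrite big_set0 muln0 muln_gt0 D_gt0.
have BnotIstar v : v \in B -> v \notin Istar by move=> vB; rewrite (disjointFr BIstar vB).
apply: (@leq_trans (\sum_(v in B) \sum_(x in Istar | e v x) w x)).
  rewrite big_distrr (bigD1 v0) // [X in _ < X](bigD1 v0) //= -addSn.
  apply: leq_add; first exact/stable_vertex_weight_lt/BnotIstar.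
  by apply: leq_sum => v /andP[vB _]; exact/ltnW/stable_vertex_weight_lt/BnotIstar.
rewrite (exchange_big_dep (fun x => x \in Istar)) /=; last by move=> v x _ /andP[].
rewrite big_distrr; apply: leq_sum => x xIstar.
rewrite sum_nat_const /= leq_mul2r; apply/orP; right.
apply: leq_trans (leq_bigmax x); apply: subset_leq_card; apply/subsetP => v.
by rewrite !inE e_sym => /and3P[].
Qed.
End Stability.

Section Purify.
Variables (T : finType) (e : rel T) (w : T -> nat) (g : nat) (I : {set T}).
Variable M : seq ((T * nat) * (T * nat)).
Hypothesis M_max : G0_max_matching e w I g M.

Definition G0_edge (l r : T * nat) : bool := [&& Lcopy w I g l, Rcopy w I r & e l.1 r.1].

Lemma G0_matchingE M' : G0_matching e w I g M' = matching G0_edge M'.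
Proof. by []. Qed.

Lemma purify_out0_weight : purify_out w I g M = set0 ->
  g * \sum_(u in I) w u <= \sum_(v in nbhd e I) w v.
Proof.
move=> S0; case: M_max => /andP[/andP[/allP Medge _] uM2] _.
rewrite big_distrr -(size_copies I (fun u => g * w u)) -size_copies.
apply: (leq_size_matched (f := fst) uM2 (uniq_copies _ _)) => [[u j] | [[a i] [v j]] pM].
  rewrite mem_copies => /andP[uI jgw]; apply: contraT => ujM.
  suff : u \in purify_out w I g M by rewrite S0 inE.
  by rewrite inE uI; apply/existsP; exists (Ordinal jgw).
have /and3P[_ /andP[_ jw] eav] := Medge _ pM.
rewrite !mem_copies /= jw andbT => /andP[aI _]; rewrite inE.
by apply/existsP; exists a; rewrite aI.
Qed.

Hypotheses (e_sym : symmetric e) (g_gt0 : 0 < g) (I_indep : independent e I).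

Lemma purify_out_sub (R : realFieldType) (Istar : {set T}) :
  stable_with R e w g Istar -> purify_out w I g M \subset Istar.
Proof.
move=> Istar_stable; have [/independentP iIstar _] := Istar_stable.
have /independentP iI := I_indep.
case: M_max; rewrite G0_matchingE => mM maxM.
have /andP[/andP[/allP Medge uM1] _] := mM.
apply/subsetP => u; rewrite inE => /andP[uI /existsP[i l0M]]; apply: contraT => uIstar.
pose reach l := exists k, alt_reach G0_edge M (u, val i) k l.
set A := [set a in I :\: Istar | `[< exists j, reach (a, j) >]].
have reach_Lcopy l : reach l -> Lcopy w I g l.
  case=> k /alt_reach_fst [->|/mapP[p pM ->]]; first by rewrite /Lcopy /= uI ltn_ord.
  by case/and3P: (Medge p pM).
set Rs := copies (Istar :&: nbhd e A) w.
set Ls := copies A (fun a => g * w a).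
have Rs_reached r : r \in Rs -> exists2 l, reach l & G0_edge l r.
  case: r => v j; rewrite mem_copies !inE => /andP[/andP[vIstar /existsP[a]]].
  rewrite !inE => /andP[/andP[/andP[_ aI] /asboolP[ja rl]] eav] jw.
  exists (a, ja) => //; rewrite /G0_edge reach_Lcopy // /Rcopy /= jw eav !andbT.
  by apply: contraTN eav => vI; exact: iI.
have matched : {subset Rs <= map snd M}.
  by move=> r /Rs_reached[l [k rl] elr]; exact: maximum_matching_alt_reach rl elr.
have partners : {in M, forall p, p.2 \in Rs -> p.1 \in Ls}.
  move=> [[a ja] [v j]] pM /= vjRs; have [l [k rl] elr] := Rs_reached _ vjRs.
  have rp : reach (a, ja) by exists k.+1; right; exists l, (v, j).
  have /and3P[/andP[/= aI jal] _ /= eav] := Medge _ pM.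
  move: vjRs; rewrite mem_copies !inE => /andP[/andP[vIstar _] _].
  rewrite mem_copies !inE aI jal !andbT; apply/andP; split.
    by apply: contraTN eav => aIstar; exact: iIstar.
  by apply/asboolP; exists ja.
have A_lt : g * \sum_(a in A) w a < \sum_(v in Istar :&: nbhd e A) w v.
  apply: (stable_nbhd_weight_lt g_gt0 Istar_stable e_sym).
  - by apply: independentS I_indep; apply/subsetP => a; rewrite !inE => /andP[/andP[]].
  - apply/set0Pn; exists u; rewrite !inE uI uIstar /=.
    by apply/asboolP; exists (val i); exists 0.
  - by rewrite disjoint_subset; apply/subsetP => a; rewrite !inE => /andP[/andP[]].
have := leq_size_matched uM1 (uniq_copies _ _) matched partners.
by rewrite !size_copies -big_distrr leqNgt A_lt.
Qed.
End Purify.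

Lemma scaled_weight_le (R : realFieldType) (g D a x y : R) :
  (0 < a -> 0 <= g <= D -> 2 * D * a <= g ^+ 2 -> 0 <= x -> y / a <= x ->
   (g + D) * y <= g ^+ 2 * x)%R.
Proof.
move=> a_gt0 /andP[g_ge0 gD] budget x_ge0; rewrite ler_pdivrMr // => y_le.
have xa_ge0 : (0 <= x * a)%R by rewrite mulr_ge0 // ltW.
have : ((g + D) * (x * a) <= 2 * D * a * x)%R by nra.
nra.
Qed.

Theorem mainTheorem7 (R : realFieldType) (T : finType) (e : rel T)
    (w : T -> nat) (alpha : R) (gamma : nat) (Istar I : {set T})
    (M : seq ((T * nat) * (T * nat))) :
  simple_graph e ->
  0 < #|T| ->
  (forall u, 0 < w u) ->
  1 <= maxdeg e ->
  (1 <= alpha <= (maxdeg e)%:R)%R ->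
  ((gamma.-1)%:R ^+ 2 < 2%:R * (maxdeg e)%:R * alpha <= gamma%:R ^+ 2)%R ->
  gamma <= maxdeg e ->
  stable_with R e w gamma Istar ->
  independent e I ->
  ((\sum_(u in Istar) w u)%:R / alpha <= (\sum_(u in I) w u)%:R)%R ->
  G0_max_matching e w I gamma M ->
  I != Istar ->
  purify_out w I gamma M != set0 /\ purify_out w I gamma M \subset Istar.
Proof.
move=> [e_sym e_irr] _ _ D_gt0 /andP[alpha_ge1 _] /andP[_ budget] gD Istar_stable
  I_indep I_approx M_max IIstar.
have g_gt0 : 0 < gamma.
  have : (0 < gamma%:R ^+ 2 :> R)%R.
    by apply: lt_le_trans budget; rewrite !mulr_gt0 ?ltr0n // (lt_le_trans ltr01).
  by rewrite -natrX ltr0n expn_gt0 orbF.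
split; last exact: purify_out_sub Istar_stable.
apply/eqP => S0.
set Wn := \sum_(u in I) w u; set Ws := \sum_(u in Istar) w u.
set Nout := \sum_(v in nbhd e I :\: Istar) w v.
have Ws_gt0 : 0 < Ws := stable_weight_gt0 g_gt0 Istar_stable I_indep IIstar.
have I_nbhd : gamma * Wn <= Ws + Nout.
  apply: leq_trans (purify_out0_weight M_max S0) _.
  rewrite (big_setID Istar) [Ws](big_setID (nbhd e I)) /= setIC -addnA leq_add2l.
  exact: leq_addl.
have out_lt : gamma * Nout < maxdeg e * Ws.
  apply: (stable_outside_weight_lt g_gt0 Istar_stable e_sym e_irr D_gt0 Ws_gt0).
  by apply/setDidPl; rewrite setDDl setUid.
have nat_lt : gamma * (gamma * Wn) < (gamma + maxdeg e) * Ws by nia.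
have alpha_gt0 : (0 < alpha)%R by apply: lt_le_trans alpha_ge1.
have g_bounds : (0 <= (gamma%:R : R) <= (maxdeg e)%:R)%R by rewrite ler0n ler_nat.
have := scaled_weight_le alpha_gt0 g_bounds budget (ler0n _ _) I_approx.
move: nat_lt; rewrite -(ltr_nat R) !natrM natrD mulrA -expr2 => /lt_le_trans lt /lt.
by rewrite ltxx.
Qed.
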